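(* Let $G=Q_8=\langle i,j\mid i^4=j^4=j^{-1}iji=1,\ i^2=j^2\rangle$ and let $m\ge 3$. Let $\Delta$ be the graph with vertex set $G\times\{0,\dots,m-1\}$ (write $g_\ell=(g,\ell)$, $G_\ell=G\times\{\ell\}$) with the following edges: inside $G_0$, $\{g_0,(rg)_0\}$ for $r\in\{i,i^2,i^3\}$; inside $G_\ell$ for $\ell\in\{1,\dots,m-3\}$, $\{g_\ell,(i^2g)_\ell\}$; no edges inside $G_{m-2}$; inside $G_{m-1}$, $\{g_{m-1},(rg)_{m-1}\}$ for $r\in\{j,j^{-1}\}$; for $\ell\in\{0,\dots,m-3\}$ and $g\in G$, $g_\ell$ is adjacent to $g_{\ell+1}$ and to $(ig)_{\ell+1}$; for $g\in G$, $g_{m-2}$ is adjacent to $g_{m-1}$, $(ig)_{m-1}$ and $(jg)_{m-1}$; there are no other edges. Then, identifying $g\in G$ with the permutation $y_\ell\mapsto(yg)_\ell$, $\mathrm{Aut}(\Delta)=G$. Consequently $Q_8$ admits an $m$-GRR for every $m\ge 3$.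
   Context: An $m$-GRR for a group $G$ is a finite regular simple graph having a semiregular group of automorphisms isomorphic to $G$ with exactly $m$ vertex-orbits and whose full automorphism group is isomorphic to $G$. *)

From HB Require Import structures.
From mathcomp Require Import all_boot all_fingroup.
Set Implicit Arguments. Unset Strict Implicit. Unset Printing Implicit Defensive.

Inductive q8 := P1 | N1 | Pi | Ni | Pj | Nj | Pk | Nk.

Definition q8_enc (x : q8) : bool * (bool * bool) :=
  match x with
  | P1 => (false, (false, false)) | N1 => (true, (false, false))
  | Pi => (false, (false, true))  | Ni => (true, (false, true))
  | Pj => (false, (true, false))  | Nj => (true, (true, false))
  | Pk => (false, (true, true))   | Nk => (true, (true, true))
  end.
Definition q8_dec (c : bool * (bool * bool)) : q8 :=
  match c with
  | (false, (false, false)) => P1 | (true, (false, false)) => N1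
  | (false, (false, true)) => Pi  | (true, (false, true)) => Ni
  | (false, (true, false)) => Pj  | (true, (true, false)) => Nj
  | (false, (true, true)) => Pk   | (true, (true, true)) => Nk
  end.
Lemma q8_encK : cancel q8_enc q8_dec. Proof. by case. Qed.
HB.instance Definition _ := Equality.copy q8 (can_type q8_encK).
HB.instance Definition _ := Choice.copy q8 (can_type q8_encK).
HB.instance Definition _ := Countable.copy q8 (can_type q8_encK).
HB.instance Definition _ := Finite.copy q8 (can_type q8_encK).

Definition q8_neg (x : q8) : q8 :=
  match x with
  | P1 => N1 | N1 => P1 | Pi => Ni | Ni => Pi
  | Pj => Nj | Nj => Pj | Pk => Nk | Nk => Pk
  end.

(* product of the positive units 1,i,j,k *)
Definition q8_mul_pos (x y : q8) : q8 :=
  match x, y with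
  | P1, y => y
  | x, P1 => x
  | Pi, Pi => N1 | Pi, Pj => Pk | Pi, Pk => Nj
  | Pj, Pi => Nk | Pj, Pj => N1 | Pj, Pk => Pi
  | Pk, Pi => Pj | Pk, Pj => Ni | Pk, Pk => N1
  | _, _ => P1 (* unreachable *)
  end.

Definition q8_abs (x : q8) : q8 :=
  match x with
  | P1 | N1 => P1 | Pi | Ni => Pi | Pj | Nj => Pj | Pk | Nk => Pk
  end.
Definition q8_isneg (x : q8) : bool :=
  match x with N1 | Ni | Nj | Nk => true | _ => false end.

Definition q8_mul (x y : q8) : q8 :=
  let z := q8_mul_pos (q8_abs x) (q8_abs y) in
  if q8_isneg x (+) q8_isneg y then q8_neg z else z.

Definition q8_inv (x : q8) : q8 :=
  match x with
  | P1 => P1 | N1 => N1 | Pi => Ni | Ni => Pi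
  | Pj => Nj | Nj => Pj | Pk => Nk | Nk => Pk
  end.

Lemma q8_mulA : associative q8_mul.
Proof. by do 3!case. Qed.
Lemma q8_mul1 : left_id P1 q8_mul.
Proof. by case. Qed.
Lemma q8_mulV : left_inverse P1 q8_inv q8_mul.
Proof. by case. Qed.

HB.instance Definition _ := Finite_isGroup.Build q8 q8_mulA q8_mul1 q8_mulV.

Local Open Scope group_scope.

Definition qi : q8 := Pi.
Definition qj : q8 := Pj.

(* A directed "arc" relation lists each edge (once or more); adjacency is   *)
(* its symmetrization.                                                      *)
Definition Delta_arc (m : nat) (x y : q8 * 'I_m) : bool :=
  let g := x.1 in let a := val x.2 in
  let h := y.1 in let b := val y.2 in
  [|| [&& a == 0, b == 0 & h \in [:: qi * g; qi ^+ 2 * g; qi ^+ 3 * g]],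
      [&& 1 <= a, a <= m - 3, b == a & h == qi ^+ 2 * g],
      [&& a == m - 1, b == m - 1 & h \in [:: qj * g; qj^-1 * g]],
      [&& a <= m - 3, b == a.+1 & h \in [:: g; qi * g]]
    | [&& a == m - 2, b == m - 1 & h \in [:: g; qi * g; qj * g]] ].

Definition Delta_adj (m : nat) : rel (q8 * 'I_m) :=
  fun x y => Delta_arc x y || Delta_arc y x.

Definition Aut_graph (V : finType) (e : rel V) : {set {perm V}} :=
  [set p : {perm V} | [forall x, forall y, e (p x) (p y) == e x y]].

Lemma Aut_graph_group_set (V : finType) (e : rel V) : group_set (Aut_graph e).
Proof.
apply/andP; split.
  by rewrite inE; apply/forallP=> x; apply/forallP=> y; rewrite !perm1.
apply/subsetP=> _ /imset2P[p q Hp Hq ->].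
rewrite !inE in Hp Hq *; apply/forallP=> x; apply/forallP=> y.
rewrite !permM (eqP (forallP (forallP Hq (p x)) (p y))).
exact: (forallP (forallP Hp x) y).
Qed.
Canonical Aut_graph_group (V : finType) (e : rel V) :=
  Group (Aut_graph_group_set e).

Definition q8_rmul (m : nat) (g : q8) (x : q8 * 'I_m) : q8 * 'I_m :=
  (x.1 * g, x.2).
Lemma q8_rmul_inj (m : nat) (g : q8) : injective (@q8_rmul m g).
Proof.
by move=> [y l] [y' l'] [/mulIg -> ->].
Qed.
Definition q8_rho (m : nat) (g : q8) : {perm q8 * 'I_m} :=
  perm (@q8_rmul_inj m g).

Definition is_mGRR (gT : finGroupType) (G : {group gT}) (m : nat)
    (V : finType) (e : rel V) : Prop :=
  [/\ symmetric e, irreflexive e,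
      (exists k, forall x : V, #|[set y | e x y]| = k)
    & exists A : {group {perm V}},
        [/\ A \subset Aut_graph e, A \isog G,
            (forall (a : {perm V}) (x : V), a \in A -> a x = x -> a = 1),
            #|[set orbit 'P A x | x : V]| = m
          & Aut_graph e \isog G]].

Definition has_mGRR (gT : finGroupType) (G : {group gT}) (m : nat) : Prop :=
  exists (V : finType) (e : rel V), is_mGRR G m e.

From HB Require Import structures.
From mathcomp Require Import all_boot all_fingroup zify.

(* Every automorphism of Delta preserves the layers G_l.  Edges only join equal
   or consecutive layers and each g_(l+1) is adjacent to g_l, so the layer of a
   vertex is its distance to G_0; and G_0 is the set of vertices lying in a K4,
   as an enumeration of the K4s of every pair of consecutive layers shows.  On
   the top three layers an automorphism therefore restricts to bijections
   f_0, f_1, f_2 of Q8, and a verified backtracking search shows that preserving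
   adjacency forces f_k g = g c for a single c.  Since g_l is the only vertex of
   G_l adjacent to both g_(l+1) and (ig)_(l+1), the right translation by c
   propagates down to every layer.  Hence Aut(Delta) is the right regular
   representation of Q8, which acts semiregularly with the m layers as orbits. *)

Set Implicit Arguments.
Unset Strict Implicit.
Unset Printing Implicit Defensive.

Local Open Scope group_scope.

Section GraphAutomorphisms.

Variables (V : finType) (e : rel V).

Lemma Aut_graph_edge (p : {perm V}) x y :
  p \in Aut_graph e -> e (p x) (p y) = e x y.
Proof. by rewrite inE => /forallP/(_ x)/forallP/(_ y)/eqP. Qed.

Definition in_K4 (v : V) : bool :=
  [exists x, exists y, exists z, [&& e v x, e v y, e v z, e x y, e x z & e y z]].

Lemma Aut_graph_K4 (p : {perm V}) v : p \in Aut_graph e -> in_K4 v -> in_K4 (p v).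
Proof.
move=> Ap /existsP[x /existsP[y /existsP[z exyz]]].
apply/existsP; exists (p x); apply/existsP; exists (p y); apply/existsP; exists (p z).
by rewrite !Aut_graph_edge.
Qed.

Lemma Aut_graph_level (lv : V -> nat) :
  (forall x y, e x y -> lv x <= (lv y).+1) ->
  (forall x, 0 < lv x -> exists2 y, e x y & (lv y).+1 = lv x) ->
  (forall p x, p \in Aut_graph e -> lv x = 0 -> lv (p x) = 0) ->
  forall p x, p \in Aut_graph e -> lv (p x) = lv x.
Proof.
move=> near down base p x Ap.
suff: forall k p x, p \in Aut_graph e -> lv x <= k -> lv (p x) = lv x.
  by apply; last exact: leqnn.
elim=> [|k IHk] {}p {}x {}Ap lvx; first by rewrite (base p x Ap); lia.
have [|lt_k_lvx] := leqP (lv x) k; first exact: IHk.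
have [y exy lvy] := down x (leq_ltn_trans (leq0n k) lt_k_lvx).
have lv_py : lv (p y) = lv y by apply: IHk => //; lia.
have := near (p x) (p y); rewrite Aut_graph_edge // lv_py => /(_ exy) le_pxy.
have [le_pxk|] := leqP (lv (p x)) k; last by lia.
have Api : p^-1 \in Aut_graph e by rewrite groupV.
by have := IHk _ (p x) Api le_pxk; rewrite permK; lia.
Qed.

End GraphAutomorphisms.

Lemma mem_rcoset_seq (gT : finGroupType) (R : seq gT) (g h : gT) :
  (h \in [seq r * g | r <- R]) = (h * g^-1 \in R).
Proof. by rewrite -{1}(mulgKV g h) (mem_map (mulIg g)). Qed.

Lemma mulg_ratio (gT : finGroupType) (x y g : gT) : (x * g) * (y * g)^-1 = x * y^-1.
Proof. by rewrite invMg mulgA mulgK. Qed.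

Lemma card_mem_uniq (T : finType) (L : seq T) : uniq L -> #|[pred x | x \in L]| = size L.
Proof. by move/card_uniqP <-; apply: eq_card. Qed.

Lemma card_mem_inv_uniq (gT : finGroupType) (L : seq gT) :
  uniq L -> #|[pred x | x^-1 \in L]| = size L.
Proof.
move=> uL; rewrite -(size_map (fun x => x^-1)) -card_mem_uniq ?(map_inj_uniq invg_inj) //.
by apply: eq_card => x; rewrite !inE -{2}(invgK x) mem_map //; apply: invg_inj.
Qed.

Lemma sum_ord_indicator (m t K : nat) :
  \sum_(b < m) ((b == t :> nat) * K)%N = ((t < m) * K)%N.
Proof.
have [t_lt_m | m_le_t] := ltnP t m.
  rewrite (bigD1 (Ordinal t_lt_m)) //= eqxx big1 ?addn0 // => b.
  by rewrite -val_eqE => /negbTE->.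
by rewrite mul0n big1 // => b _; rewrite (ltn_eqF (leq_trans (ltn_ord b) m_le_t)).
Qed.

Section RigiditySearch.

Variables (I : eqType) (gT : finGroupType) (elems : seq gT).
Variable R : I -> I -> gT -> bool.

(* A triple (k, g, u) of the partial assignment A stands for the guess
   f k g = u * c, where c is the unknown right translation. *)
Definition search_consistent (kw : I) (gw u : gT) (t : I * gT * gT) : bool :=
  let: (k, g, uk) := t in
  ((k == kw) ==> ((g == gw) == (uk == u))) && (R kw k (uk * u^-1) == R kw k (g * gw^-1)).

Definition search_candidates (kw : I) (gw : gT) (A : seq (I * gT * gT)) : seq gT :=
  [seq u <- elems | all (search_consistent kw gw u) A].

Fixpoint rigid_search (A : seq (I * gT * gT)) (ws : seq (I * gT)) : bool :=
  if ws is (kw, gw) :: ws' then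
    all (fun u => rigid_search ((kw, gw, u) :: A) ws') (search_candidates kw gw A)
  else all (fun t => t.2 == t.1.2) A.

Hypothesis elemsP : forall g, g \in elems.
Variable f : I -> gT -> gT.
Hypothesis f_inj : forall k, injective (f k).
Hypothesis f_adj : forall k k' g h, R k k' (f k' h * (f k g)^-1) = R k k' (h * g^-1).

Lemma rigid_search_sound (c : gT) ws A :
  rigid_search A ws -> (forall t, t \in A -> f t.1.1 t.1.2 = t.2 * c) ->
  (forall w, w \in ws -> f w.1 w.2 = w.2 * c) /\ (forall t, t \in A -> t.2 = t.1.2).
Proof.
elim: ws A => [|[kw gw] ws IHws] A /=.
  by move=> /allP A_id _; split=> // t /A_id/eqP.
move=> search_ok A_ok; pose u := f kw gw * c^-1.
have f_kw_gw : f kw gw = u * c by rewrite mulgKV.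
have u_cand : u \in search_candidates kw gw A.
  rewrite mem_filter elemsP andbT; apply/allP => -[[k g] uk] /A_ok /= f_k_g.
  apply/andP; split.
    apply/implyP => /eqP k_kw; rewrite k_kw in f_k_g.
    by rewrite -[uk == u](inj_eq (mulIg c)) -f_k_g -f_kw_gw (inj_eq (@f_inj kw)).
  by rewrite -(mulg_ratio uk u c) -f_k_g -f_kw_gw f_adj.
have A'_ok t : t \in (kw, gw, u) :: A -> f t.1.1 t.1.2 = t.2 * c.
  by rewrite inE => /orP[/eqP-> // | /A_ok].
have [ws_ok A'_id] := IHws _ (allP search_ok u u_cand) A'_ok.
have u_gw : u = gw by apply: (A'_id (kw, gw, u)); rewrite mem_head.
split; last by move=> t At; apply: A'_id; rewrite inE At orbT.
by move=> w; rewrite inE => /orP[/eqP-> /= | /ws_ok //]; rewrite f_kw_gw u_gw.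
Qed.

Lemma rigid_search_rmul (keys : seq I) k0 :
  (forall k, k \in keys) ->
  rigid_search [:: (k0, 1, 1)] [seq (k, g) | g <- elems, k <- keys] ->
  forall k g, f k g = g * f k0 1.
Proof.
move=> keysP search_ok k g.
have start_ok t : t \in [:: (k0, 1, 1)] -> f t.1.1 t.1.2 = t.2 * f k0 1.
  by rewrite inE => /eqP-> /=; rewrite mul1g.
have [ws_ok _] := rigid_search_sound search_ok start_ok.
by apply: (ws_ok (k, g)); apply: allpairs_f.
Qed.

End RigiditySearch.

Definition bottom_conn : seq q8 := [:: qi; qi ^+ 2; qi ^+ 3].
Definition middle_conn : seq q8 := [:: qi ^+ 2].
Definition top_conn : seq q8 := [:: qj; qj^-1].
Definition low_cross : seq q8 := [:: 1; qi].
Definition high_cross : seq q8 := [:: 1; qi; qj].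

Section Layers.

Variable m : nat.

Definition layer_arc (a b : nat) (s : q8) : bool :=
  [|| [&& a == 0, b == 0 & s \in bottom_conn],
      [&& 1 <= a, a <= m - 3, b == a & s \in middle_conn],
      [&& a == m - 1, b == m - 1 & s \in top_conn],
      [&& a <= m - 3, b == a.+1 & s \in low_cross]
    | [&& a == m - 2, b == m - 1 & s \in high_cross]].

Definition inner_conn (a : nat) : seq q8 :=
  if a == 0 then bottom_conn else if a <= m - 3 then middle_conn
  else if a == m - 1 then top_conn else [::].

Definition cross_conn (a : nat) : seq q8 :=
  if a <= m - 3 then low_cross else high_cross.

Definition layer_adj (a b : nat) (s : q8) : bool :=
  [|| (b == a) && (s \in inner_conn a),
      (b == a.+1) && (s \in cross_conn a)
    | (a == b.+1) && (s^-1 \in cross_conn b)].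

Lemma Delta_arcE (g h : q8) (a b : 'I_m) :
  Delta_arc (g, a) (h, b) = layer_arc a b (h * g^-1).
Proof.
by rewrite /Delta_arc /layer_arc /= -[h == _]mem_seq1 -!mem_rcoset_seq /= mul1g.
Qed.

Lemma layer_adj_near a b s : layer_adj a b s -> (a <= b.+1) && (b <= a.+1).
Proof. by case/or3P=> /andP[/eqP-> _]; lia. Qed.

Lemma layer_adj_up a s : layer_adj a a.+1 s = (s \in cross_conn a).
Proof. by rewrite /layer_adj eqxx (gtn_eqF (ltnSn a)) (ltn_eqF (leqnSn a.+1)) /= orbF. Qed.

Lemma layer_adj_down a s : s \in cross_conn a -> layer_adj a.+1 a s^-1.
Proof. by move=> cs; rewrite /layer_adj invgK cs eqxx !orbT. Qed.

Lemma one_cross a : 1 \in cross_conn a.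
Proof. by rewrite /cross_conn; case: ifP. Qed.

Lemma qi_cross a : qi \in cross_conn a.
Proof. by rewrite /cross_conn; case: ifP. Qed.

Lemma cross_conn_qi a s : s \in cross_conn a -> qi * s \in cross_conn a -> s = 1.
Proof. by rewrite /cross_conn; case: ifP => _; case: s. Qed.

Lemma inner_conn_inv a s : (s^-1 \in inner_conn a) = (s \in inner_conn a).
Proof. by rewrite /inner_conn; repeat case: ifP => _; case: s. Qed.

Lemma uniq_inner_conn a : uniq (inner_conn a).
Proof. by rewrite /inner_conn; repeat case: ifP. Qed.

Lemma uniq_cross_conn a : uniq (cross_conn a).
Proof. by rewrite /cross_conn; case: ifP. Qed.

Lemma card_layer_adj a b :
  #|[pred s | layer_adj a b s]| =
  ((b == a) * size (inner_conn a) + (b == a.+1) * size (cross_conn a)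
    + (a == b.+1) * size (cross_conn b))%N.
Proof.
rewrite /layer_adj; have [-> | ba] := eqVneq b a.
  rewrite (ltn_eqF (ltnSn a)) /= mul1n !mul0n !addn0 -card_mem_uniq ?uniq_inner_conn //.
  by apply: eq_card => s; rewrite !inE orbF.
have [-> | ba1] := eqVneq b a.+1.
  rewrite (ltn_eqF (leqnSn a.+1)) /= mul1n !mul0n add0n addn0.
  by rewrite -card_mem_uniq ?uniq_cross_conn //; apply: eq_card => s; rewrite !inE orbF.
have [-> | ab1] := eqVneq a b.+1.
  by rewrite /= !mul0n !add0n mul1n -card_mem_inv_uniq ?uniq_cross_conn.
by rewrite /= !mul0n; apply: eq_card0.
Qed.

Hypothesis hm : 3 <= m.

Lemma layer_arc_same a s : a < m -> layer_arc a a s = (s \in inner_conn a).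
Proof.
by move=> ha; rewrite /layer_arc /inner_conn; repeat case: ifP => ?; rewrite ?in_nil; lia.
Qed.

Lemma layer_arc_up a s : a.+1 < m -> layer_arc a a.+1 s = (s \in cross_conn a).
Proof. by move=> ha; rewrite /layer_arc /cross_conn; case: ifP => ?; lia. Qed.

Lemma layer_arc_down a s : layer_arc a.+1 a s = false.
Proof. by rewrite /layer_arc; lia. Qed.

Lemma layer_arc_far a b s : b != a -> b != a.+1 -> layer_arc a b s = false.
Proof. by rewrite /layer_arc; lia. Qed.

Lemma layer_adj_arc a b s : a < m -> b < m ->
  layer_arc a b s || layer_arc b a s^-1 = layer_adj a b s.
Proof.
move=> ha hb; rewrite /layer_adj.
have [-> | neq] := eqVneq b a.
  by rewrite !layer_arc_same // inner_conn_inv orbb (ltn_eqF (ltnSn a)) /= orbF.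
case: (eqVneq b a.+1) hb => [-> hb | neq1 _].
  by rewrite layer_arc_down layer_arc_up // (ltn_eqF (leqnSn a.+1)) /= !orbF.
case: (eqVneq a b.+1) ha => [-> ha | neq2 _].
  by rewrite layer_arc_down layer_arc_up.
by rewrite !layer_arc_far // eq_sym.
Qed.

Lemma Delta_adjE (g h : q8) (a b : 'I_m) :
  Delta_adj (g, a) (h, b) = layer_adj a b (h * g^-1).
Proof. by rewrite /Delta_adj !Delta_arcE -layer_adj_arc // invMg invgK. Qed.

Lemma Delta_adj_irr : irreflexive (@Delta_adj m).
Proof.
move=> [g a]; rewrite Delta_adjE mulgV /layer_adj eqxx (ltn_eqF (ltnSn a)) /= orbF.
by rewrite /inner_conn; repeat case: ifP.
Qed.

End Layers.

Lemma layer_adj_top m (k k' : nat) s : 3 <= m -> k < 3 -> k' < 3 -> (k != 0) || (k' != 0) ->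
  layer_adj m (m - 3 + k) (m - 3 + k') s = layer_adj 3 k k' s.
Proof.
move=> hm; rewrite /layer_adj /inner_conn /cross_conn.
case: k k' => [|[|[|//]]] [|[|[|//]]] //= _ _ _;
  by repeat case: ifP => ?; rewrite ?in_nil; lia.
Qed.

Definition q8_elems : seq q8 := [:: P1; N1; Pi; Ni; Pj; Nj; Pk; Nk].

Lemma mem_q8_elems g : g \in q8_elems.
Proof. by case: g. Qed.

Lemma mem_bools (b : bool) : b \in [:: false; true].
Proof. by case: b. Qed.

(* Adjacency inside two consecutive layers lo (false) and lo + 1 (true) whose
   inner connection sets are L0 and L1 and whose cross connection set is C. *)
Definition window_adj (L0 L1 C : seq q8) (x y : bool) (s : q8) : bool :=
  [|| (y == x) && (s \in if x then L1 else L0),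
      y && ~~ x && (s \in C)
    | x && ~~ y && (s^-1 \in C)].

Lemma layer_adj_window m lo (x y : bool) s :
  layer_adj m (lo + x) (lo + y) s =
  window_adj (inner_conn m lo) (inner_conn m lo.+1) (cross_conn m lo) x y s.
Proof.
rewrite /layer_adj /window_adj.
by case: x y => [] []; rewrite /= ?addn0 ?addn1 eqxx ?(ltn_eqF (ltnSn _)) ?(gtn_eqF (ltnSn _))
  ?(ltn_eqF (leqnSn _.+1)) /= ?orbF.
Qed.

Definition upper_kinds : seq (seq q8) := [:: middle_conn; [::]; top_conn].
Definition cross_kinds : seq (seq q8) := [:: low_cross; high_cross].

Lemma inner_conn_kind m a : inner_conn m a \in bottom_conn :: upper_kinds.
Proof. by rewrite /inner_conn; repeat case: ifP; rewrite !inE eqxx ?orbT. Qed.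

Lemma inner_conn_upper m a : inner_conn m a.+1 \in upper_kinds.
Proof. by rewrite /inner_conn; repeat case: ifP; rewrite !inE eqxx ?orbT. Qed.

Lemma cross_conn_kind m a : cross_conn m a \in cross_kinds.
Proof. by rewrite /cross_conn; case: ifP; rewrite !inE eqxx ?orbT. Qed.

Lemma inner_conn_bottom m a : inner_conn m a = bottom_conn -> a = 0.
Proof. by rewrite /inner_conn; case: ifP => [/eqP //|_]; repeat case: ifP. Qed.

Definition window_K4 L0 L1 C (x0 x1 x2 x3 : bool) (s1 s2 s3 : q8) : bool :=
  let W := window_adj L0 L1 C in
  [&& W x0 x1 s1, W x0 x2 s2, W x0 x3 s3,
      W x1 x2 (s2 * s1^-1), W x1 x3 (s3 * s1^-1) & W x2 x3 (s3 * s2^-1)].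

Definition window_K4_check : bool :=
  all (fun L0 => all (fun L1 => all (fun C =>
  all (fun x0 => all (fun x1 => all (fun x2 => all (fun x3 =>
  all (fun s1 => all (fun s2 => all (fun s3 =>
    window_K4 L0 L1 C x0 x1 x2 x3 s1 s2 s3 ==> ~~ x0 && (L0 == bottom_conn))
  q8_elems) q8_elems) q8_elems)
  [:: false; true]) [:: false; true]) [:: false; true]) [:: false; true])
  cross_kinds) upper_kinds) (bottom_conn :: upper_kinds).

Lemma window_K4_checkP : window_K4_check.
Proof. by vm_compute. Qed.

Lemma window_K4_bottom L0 L1 C x0 x1 x2 x3 s1 s2 s3 :
  L0 \in bottom_conn :: upper_kinds -> L1 \in upper_kinds -> C \in cross_kinds ->
  let W := window_adj L0 L1 C in
  W x0 x1 s1 -> W x0 x2 s2 -> W x0 x3 s3 ->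
  W x1 x2 (s2 * s1^-1) -> W x1 x3 (s3 * s1^-1) -> W x2 x3 (s3 * s2^-1) ->
  ~~ x0 && (L0 == bottom_conn).
Proof.
move=> L0k L1k Ck /= e01 e02 e03 e12 e13 e23; move: window_K4_checkP.
move=> /allP/(_ _ L0k)/allP/(_ _ L1k)/allP/(_ _ Ck).
move=> /allP/(_ _ (mem_bools x0))/allP/(_ _ (mem_bools x1)).
move=> /allP/(_ _ (mem_bools x2))/allP/(_ _ (mem_bools x3)).
move=> /allP/(_ _ (mem_q8_elems s1))/allP/(_ _ (mem_q8_elems s2)).
move=> /allP/(_ _ (mem_q8_elems s3))/implyP; apply.
by rewrite /window_K4 e01 e02 e03 e12 e13 e23.
Qed.

Section DeltaLayers.

Variables (m : nat) (hm : 3 <= m).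

Lemma Delta_K4_layer (v : q8 * 'I_m) : in_K4 (@Delta_adj m) v -> v.2 = 0 :> nat.
Proof.
case: v => g0 a0 /existsP[[g1 a1] /existsP[[g2 a2] /existsP[[g3 a3]]]] /=.
rewrite !Delta_adjE // => /and5P[e01 e02 e03 e12 /andP[e13 e23]].
rewrite -(mulg_ratio g2 g1 g0^-1) in e12; rewrite -(mulg_ratio g3 g1 g0^-1) in e13.
rewrite -(mulg_ratio g3 g2 g0^-1) in e23.
move: (layer_adj_near e01) (layer_adj_near e02) (layer_adj_near e03).
move: (layer_adj_near e12) (layer_adj_near e13) (layer_adj_near e23).
do 6!case/andP=> ? ?.
(* The four layers lie in {lo, lo + 1}. *)
pose lo := minn (minn a0 a1) (minn a2 a3).
have a0E : (a0 : nat) = lo + (a0 != lo :> nat) by rewrite /lo; lia.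
have a1E : (a1 : nat) = lo + (a1 != lo :> nat) by rewrite /lo; lia.
have a2E : (a2 : nat) = lo + (a2 != lo :> nat) by rewrite /lo; lia.
have a3E : (a3 : nat) = lo + (a3 != lo :> nat) by rewrite /lo; lia.
rewrite a0E a1E a2E a3E !layer_adj_window in e01 e02 e03 e12 e13 e23.
have /andP[/negPn/eqP a0lo /eqP/inner_conn_bottom lo0] :=
  window_K4_bottom (inner_conn_kind m lo) (inner_conn_upper m lo) (cross_conn_kind m lo)
    e01 e02 e03 e12 e13 e23.
by rewrite a0E a0lo lo0.
Qed.

Lemma Delta_bottom_K4 (g : q8) (a : 'I_m) : a = 0 :> nat -> in_K4 (@Delta_adj m) (g, a).
Proof.
move=> a0; apply/existsP; exists (qi * g, a); apply/existsP; exists (qi ^+ 2 * g, a).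
apply/existsP; exists (qi ^+ 3 * g, a).
by rewrite !Delta_adjE // !mulg_ratio !mulgK /layer_adj /inner_conn eqxx a0.
Qed.

Lemma Aut_Delta_layer (p : {perm q8 * 'I_m}) v :
  p \in Aut_graph (@Delta_adj m) -> (p v).2 = v.2.
Proof.
move=> Ap; apply: ord_inj.
apply: (@Aut_graph_level _ _ (fun v => nat_of_ord v.2) _ _ _ p v Ap).
- by move=> [g a] [h b]; rewrite Delta_adjE // => /layer_adj_near/andP[].
- move=> [g a] /= a_gt0.
  have lt_a1m : a.-1 < m by rewrite (leq_ltn_trans (leq_pred a)).
  exists (g, Ordinal lt_a1m); last by rewrite /= prednK.
  by rewrite Delta_adjE //= -{1}(prednK a_gt0) mulgV -invg1 layer_adj_down ?one_cross.
- move=> q [g a] Aq /= a0.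
  exact: Delta_K4_layer (Aut_graph_K4 Aq (Delta_bottom_K4 g a0)).
Qed.

Lemma Delta_regular (x : q8 * 'I_m) : #|[set y | Delta_adj x y]| = 5.
Proof.
case: x => g a; rewrite -sum1dep_card big_mkcond /=.
transitivity (\sum_(h : q8) \sum_(b < m) (Delta_adj (g, a) (h, b) : nat)).
  by rewrite pair_big; apply: eq_bigr => -[h b] _; case: ifP.
rewrite exchange_big /=.
transitivity (\sum_(b < m) #|[pred s | layer_adj m a b s]|).
  apply: eq_bigr => b _; rewrite (reindex_inj (mulIg g)) /= -sum1_card [RHS]big_mkcond.
  by apply: eq_bigr => s _; rewrite Delta_adjE // mulgK inE; case: ifP.
have below (b : nat) : ((a == b.+1 :> nat) * size (cross_conn m b) =
    (b == a.-1 :> nat) * ((0 < a) * size (cross_conn m a.-1)))%N.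
  case: (nat_of_ord a) => [|a'] /=; first by rewrite mul0n !muln0.
  by rewrite eqSS mul1n eq_sym; case: eqP => [->|].
under eq_bigr do rewrite card_layer_adj below.
rewrite !big_split /= !sum_ord_indicator ltn_ord.
have := ltn_ord a; rewrite /inner_conn /cross_conn.
by repeat case: ifP => ?; rewrite /=; lia.
Qed.

End DeltaLayers.

(* Layer m - 3 is the bottom layer when m = 3, so the window of the top three
   layers ignores its inner edges. *)
Definition top_adj (k k' : 'I_3) (s : q8) : bool :=
  ((k != 0 :> nat) || (k' != 0 :> nat)) && layer_adj 3 k k' s.

Definition ord_mid : 'I_3 := Ordinal (isT : 1 < 3).

Definition I3_elems : seq 'I_3 := [:: ord0; ord_mid; ord_max].

Lemma mem_I3_elems k : k \in I3_elems.
Proof. by case: k => -[|[|[|]]] // ?; rewrite !inE -!val_eqE. Qed.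

Lemma top_search_ok :
  rigid_search q8_elems top_adj [:: (ord_mid, 1, 1)]
    [seq (k, g) | g <- q8_elems, k <- I3_elems].
Proof. by vm_compute. Qed.

Section DeltaAutomorphisms.

Variables (m : nat) (hm : 3 <= m).

Lemma q8_rho_Aut c : q8_rho m c \in Aut_graph (@Delta_adj m).
Proof.
rewrite inE; apply/forallP => -[g a]; apply/forallP => -[h b].
by rewrite !permE /q8_rmul /= !Delta_adjE // mulg_ratio.
Qed.

Lemma top_layer_subproof (k : 'I_3) : m - 3 + k < m.
Proof. by have := ltn_ord k; lia. Qed.

Definition top_layer (k : 'I_3) : 'I_m := Ordinal (top_layer_subproof k).

Variables (p : {perm q8 * 'I_m}) (Ap : p \in Aut_graph (@Delta_adj m)).

Definition fiber (a : 'I_m) (g : q8) : q8 := (p (g, a)).1.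

Lemma Aut_Delta_fiber v : p v = (fiber v.2 v.1, v.2).
Proof.
case: v => g a; have := Aut_Delta_layer hm (g, a) Ap.
by rewrite /fiber; case: (p (g, a)) => h b /= ->.
Qed.

Lemma fiber_inj a : injective (fiber a).
Proof.
move=> g h fg_fh; have: p (g, a) = p (h, a) by rewrite !Aut_Delta_fiber /= fg_fh.
by move/perm_inj => [].
Qed.

Lemma fiber_adj (a b : 'I_m) (g h : q8) :
  layer_adj m a b (fiber b h * (fiber a g)^-1) = layer_adj m a b (h * g^-1).
Proof. by rewrite -!Delta_adjE // -[RHS](Aut_graph_edge _ _ Ap) !Aut_Delta_fiber. Qed.

Lemma fiber_top_rmul k g : fiber (top_layer k) g = g * fiber (top_layer ord_mid) 1.
Proof.
apply: (rigid_search_rmul (f := fun k => fiber (top_layer k)) mem_q8_elems _ _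
  mem_I3_elems top_search_ok) => [{}k | {}k k' {}g h]; first exact: fiber_inj.
rewrite /top_adj; case: (boolP (_ || _)) => //= k_k'_nz.
by rewrite -!(layer_adj_top _ hm) ?ltn_ord //; apply: fiber_adj.
Qed.

Lemma fiber_rmul_down c (a b : 'I_m) : b = a.+1 :> nat ->
  (forall g, fiber b g = g * c) -> forall g, fiber a g = g * c.
Proof.
move=> ba fbE g.
have up h : (h * c * (fiber a g)^-1 \in cross_conn m a) = (h * g^-1 \in cross_conn m a).
  by rewrite -fbE -layer_adj_up -ba fiber_adj ba layer_adj_up.
have s_cross : g * c * (fiber a g)^-1 \in cross_conn m a by rewrite up mulgV one_cross.
have qis_cross : qi * (g * c * (fiber a g)^-1) \in cross_conn m a.
  by rewrite !mulgA up mulgK qi_cross.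
by move/eqP: (cross_conn_qi s_cross qis_cross); rewrite -eq_mulgV1 eq_sym => /eqP.
Qed.

Lemma Aut_Delta_rmul : p = q8_rho m (fiber (top_layer ord_mid) 1).
Proof.
set c := fiber _ 1.
have fiber_rmul n (a : 'I_m) : a + n = m.-1 -> forall g, fiber a g = g * c.
  elim: n a => [|n IHn] a an.
    have -> : a = top_layer ord_max by apply: ord_inj => /=; lia.
    exact: fiber_top_rmul.
  have lt_a1m : a.+1 < m by lia.
  by apply: (fiber_rmul_down (b := Ordinal lt_a1m)) => //; apply: IHn => /=; lia.
apply/permP => -[g a]; rewrite permE /q8_rmul Aut_Delta_fiber /=.
by rewrite (fiber_rmul (m.-1 - a)) //; have := ltn_ord a; lia.
Qed.

End DeltaAutomorphisms.

Section DeltaGRR.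

Variables (m : nat) (hm : 3 <= m).

Lemma Aut_Delta : Aut_graph (@Delta_adj m) = [set q8_rho m c | c : q8].
Proof.
apply/setP => p; apply/idP/imsetP => [Ap | [c _ ->]]; last exact: q8_rho_Aut.
by exists (fiber p (top_layer hm ord_mid) 1); last exact: Aut_Delta_rmul.
Qed.

Lemma q8_rho_morphic : morphic [set: q8] (q8_rho m).
Proof.
by apply/morphicP => x y _ _; apply/permP => v; rewrite permM !permE /q8_rmul mulgA.
Qed.

Lemma q8_rho_isog : [set: q8] \isog [set q8_rho m c | c : q8].
Proof.
pose f := morphm_morphism q8_rho_morphic.
have injf : 'injm f.
  apply/injmP => x y _ _ /(congr1 (fun p : {perm _} => p (1, Ordinal (ltnW (ltnW hm))))).
  by rewrite /= /morphm !permE /q8_rmul !mul1g => -[].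
have -> : [set q8_rho m c | c : q8] = f @* [set: q8].
  by rewrite morphimEdom; apply/setP => p; apply/imsetP/imsetP => -[c _ ->]; exists c.
exact: sub_isog (subxx _) injf.
Qed.

Lemma Aut_Delta_isog : Aut_graph (@Delta_adj m) \isog [set: q8].
Proof. by have := q8_rho_isog; rewrite -Aut_Delta; apply: isog_symr. Qed.

Lemma Aut_Delta_semiregular (a : {perm q8 * 'I_m}) v :
  a \in Aut_graph (@Delta_adj m) -> a v = v -> a = 1.
Proof.
rewrite Aut_Delta => /imsetP[c _ ->]; rewrite permE /q8_rmul.
case: v => g l [] /(congr1 (fun h => g^-1 * h)); rewrite mulKg mulVg => ->.
by apply/permP => v; rewrite perm1 permE /q8_rmul mulg1; case: v.
Qed.

Definition layer_set (l : 'I_m) : {set q8 * 'I_m} := [set v | v.2 == l].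

Lemma orbit_Delta v : orbit 'P (Aut_graph (@Delta_adj m)) v = layer_set v.2.
Proof.
rewrite Aut_Delta; apply/setP => w; rewrite inE.
apply/imsetP/eqP => [[_ /imsetP[c _ ->] ->] | w2]; first by rewrite /= apermE permE.
exists (q8_rho m (v.1^-1 * w.1)); first exact: imset_f.
by rewrite /= apermE permE /q8_rmul mulKVg -w2; case: w {w2}.
Qed.

Lemma card_orbits_Delta :
  #|[set orbit 'P (Aut_graph (@Delta_adj m)) v | v : q8 * 'I_m]| = m.
Proof.
have -> : [set orbit 'P (Aut_graph (@Delta_adj m)) v | v : q8 * 'I_m] =
          layer_set @: [set: 'I_m].
  apply/setP => S; apply/imsetP/imsetP => -[v _ ->]; first by exists v.2; rewrite ?orbit_Delta.
  by exists (1, v); rewrite ?orbit_Delta.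
rewrite card_imset ?cardsT ?card_ord // => l l' ll'.
have : (1 : q8, l) \in layer_set l' by rewrite -ll' inE.
by rewrite inE => /eqP.
Qed.

End DeltaGRR.

Theorem lemma4p11 (m : nat) (hm : 3 <= m) :
  Aut_graph (@Delta_adj m) = [set q8_rho m g | g : q8]
  /\ has_mGRR [set: q8]%G m.
Proof.
split; first exact: Aut_Delta.
exists (q8 * 'I_m)%type, (@Delta_adj m); split.
- by move=> x y; rewrite /Delta_adj orbC.
- exact: Delta_adj_irr.
- by exists 5; apply: Delta_regular.
exists (Aut_graph_group (@Delta_adj m)); split=> //.
- exact: Aut_Delta_isog.
- exact: Aut_Delta_semiregular.
- exact: card_orbits_Delta.
- exact: Aut_Delta_isog.
Qed.
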